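(* For every integer $n\ge 2$, the graphs $Bar_n$, $B_{n-1}^c$ and $K_n\cup K_n$ (disjoint union of two copies of $K_n$) all have the same domination polynomial, namely $\big((1+x)^n-1\big)^2$. Consequently $\{Bar_n, B_{n-1}^c, K_n\cup K_n\}\subseteq [Bar_n]=[B_{n-1}^c]$; in particular $Bar_n$ is not $\mathcal{D}$-unique.
   Context: All graphs are finite and simple. For a graph $G$, a set $S\subseteq V(G)$ is dominating if every vertex of $V(G)\setminus S$ is adjacent to some vertex of $S$. Let $d(G,i)$ be the number of dominating sets of $G$ of cardinality $i$; the domination polynomial is $D(G,x)=\sum_{i=1}^{|V(G)|} d(G,i)x^i$. Two graphs are $\mathcal{D}$-equivalent if they have the same domination polynomial; $[G]$ denotes the set of (isomorphism classes of) graphs $\mathcal{D}$-equivalent to $G$, and $G$ is $\mathcal{D}$-unique if $[G]=\{G\}$. The $n$-barbell graph $Bar_n$ is obtained from two vertex-disjoint copies of $K_n$ by adding a single edge joining a vertex of one copy to a vertex of the other. The $m$-book graph $B_m$ has vertex set $\{u,v,a_1,\dots,a_m,b_1,\dots,b_m\}$ and edges $uv$ and $ua_i, a_ib_i, b_iv$ ($1\le i\le m$); $B_m^c$ denotes its complement. *)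

From HB Require Import structures.
From mathcomp Require Import all_boot all_order all_algebra.
Set Implicit Arguments. Unset Strict Implicit. Unset Printing Implicit Defensive.
Import Order.TTheory GRing.Theory Num.Theory.

Record sgraph := SGraph {
  vert : finType;
  adj : rel vert;
  adj_sym : symmetric adj;
  adj_irr : irreflexive adj
}.

Definition dominating (G : sgraph) (S : {set vert G}) : bool :=
  [forall v, (v \notin S) ==> [exists u in S, @adj G v u]].

Definition dom_count (G : sgraph) (i : nat) : nat :=
  #|[set S : {set vert G} | dominating S && (#|S| == i)]|.

Definition dom_poly (G : sgraph) : {poly int} :=
  (\sum_(1 <= i < #|vert G|.+1) (dom_count G i)%:R *: 'X^i)%R.

Definition D_equiv (G H : sgraph) : Prop := dom_poly G = dom_poly H.

Definition isomorphic (G H : sgraph) : Prop :=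
  exists f : vert G -> vert H, bijective f /\
    forall x y, @adj H (f x) (f y) = @adj G x y.

Definition D_unique (G : sgraph) : Prop :=
  forall H : sgraph, D_equiv H G -> isomorphic H G.

Definition KK_adj (n : nat) : rel ('I_n + 'I_n)%type :=
  fun x y => match x, y with
             | inl i, inl j => i != j
             | inr i, inr j => i != j
             | _, _ => false
             end.

Lemma KK_sym (n : nat) : symmetric (@KK_adj n).
Proof. by case=> i [] j //=; rewrite eq_sym. Qed.
Lemma KK_irr (n : nat) : irreflexive (@KK_adj n).
Proof. by case=> i /=; rewrite eqxx. Qed.

Definition KK (n : nat) : sgraph := SGraph (@KK_sym n) (@KK_irr n).

Definition bar_adj (n : nat) : rel ('I_n + 'I_n)%type :=
  fun x y => match x, y with
             | inl i, inl j => i != j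
             | inr i, inr j => i != j
             | inl i, inr j => (val i == 0) && (val j == 0)
             | inr i, inl j => (val i == 0) && (val j == 0)
             end.

Lemma bar_sym (n : nat) : symmetric (@bar_adj n).
Proof. by case=> i [] j //=; rewrite 1?eq_sym // andbC. Qed.
Lemma bar_irr (n : nat) : irreflexive (@bar_adj n).
Proof. by case=> i /=; rewrite eqxx. Qed.

Definition Bar (n : nat) : sgraph := SGraph (@bar_sym n) (@bar_irr n).

(* ---------- Book graph B_m and its complement ----------
   Vertices: inl false = u, inl true = v,
             inr (i, false) = a_i, inr (i, true) = b_i.
   Edges: uv, u a_i, a_i b_i, b_i v. *)
Definition book_adj (m : nat) : rel (bool + ('I_m * bool))%type :=
  fun x y => match x, y with
             | inl p, inl q => p != q
             | inl p, inr (i, b) => p == b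
             | inr (i, b), inl p => p == b
             | inr (i, b), inr (j, c) => (i == j) && (b != c)
             end.

Lemma book_sym (m : nat) : symmetric (@book_adj m).
Proof.
case=> [p|[i b]] [q|[j c]] /=.
- by rewrite eq_sym.
- by rewrite eq_sym.
- by rewrite eq_sym.
- by rewrite [j == i]eq_sym [c == b]eq_sym.
Qed.
Lemma book_irr (m : nat) : irreflexive (@book_adj m).
Proof. by case=> [p|[i b]] /=; rewrite !eqxx. Qed.

Definition Book (m : nat) : sgraph := SGraph (@book_sym m) (@book_irr m).

Definition compl_adj (G : sgraph) : rel (vert G) :=
  fun x y => (x != y) && ~~ @adj G x y.

Lemma compl_sym (G : sgraph) : symmetric (@compl_adj G).
Proof. by move=> x y; rewrite /compl_adj eq_sym (@adj_sym G). Qed.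
Lemma compl_irr (G : sgraph) : irreflexive (@compl_adj G).
Proof. by move=> x; rewrite /compl_adj eqxx. Qed.

Definition compl (G : sgraph) : sgraph := SGraph (@compl_sym G) (@compl_irr G).

From HB Require Import structures.
From mathcomp Require Import all_boot all_order all_algebra.
From mathcomp Require Import zify ring.
Import GRing.Theory.
Set Implicit Arguments. Unset Strict Implicit. Unset Printing Implicit Defensive.

(* Each of the three graphs has its vertices split into two halves P and ~: P of
   size n, each half a clique, and each half containing a vertex with no
   neighbour in the other half.  In such a graph a set dominates exactly when it
   meets both halves, so the i-element dominating sets are counted by
   C(2n, i) - 2 C(n, i) for i > 0, the coefficients of
   (1 + x)^(2n) - 2 (1 + x)^n + 1 = ((1 + x)^n - 1)^2.
   Bar_n is not D-unique because K_n u K_n is a disjoint union of cliques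
   while Bar_n contains an induced path on three vertices. *)

Lemma big_pred1_index_iota (R : nmodType) (a b i : nat) (F : nat -> R) :
  (\sum_(j <- index_iota a b | j == i) F j = if (a <= i < b)%N then F i else 0)%R.
Proof.
rewrite -big_filter -mem_index_iota; case: ifP => hi.
  by rewrite (filter_pred1_uniq (iota_uniq _ _) hi) big_seq1.
by rewrite big1_seq // => j; rewrite mem_filter /= => /andP[/eqP -> ]; rewrite hi.
Qed.

Lemma coef_1addX_exp (R : nzSemiRingType) (m i : nat) :
  (((1 + 'X) ^+ m : {poly R})`_i = 'C(m, i)%:R)%R.
Proof.
rewrite addrC exprD1n -(big_mkord xpredT (fun j => 'X ^+ j *+ 'C(m, j)))%R.
under eq_bigr do rewrite -scaler_nat.
by rewrite coef_sumMXn big_pred1_index_iota /=; case: ltnP => // /bin_small ->.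
Qed.

Lemma dom_count_large (G : sgraph) (i : nat) : #|vert G| < i -> dom_count G i = 0.
Proof.
move=> hi; apply/eqP; rewrite cards_eq0; apply/eqP/setP => S; rewrite !inE.
apply/negbTE; rewrite negb_and; apply/orP; right.
by apply: contraTneq hi => <-; rewrite -leqNgt max_card.
Qed.

Lemma coef_dom_poly (G : sgraph) (i : nat) :
  ((dom_poly G)`_i = ((0 < i) * dom_count G i)%:R)%R.
Proof.
rewrite coef_sumMXn big_pred1_index_iota; case: i => [|i] //=.
by rewrite mul1n; case: leqP => // hi; rewrite dom_count_large.
Qed.

Lemma card_draws_meeting_both (T : finType) (P : {set T}) (i : nat) : 0 < i ->
  #|[set S : {set T} | ~~ (S \subset P) && ~~ (S \subset ~: P) && (#|S| == i)]|
    + 'C(#|P|, i) + 'C(#|~: P|, i) = 'C(#|T|, i).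
Proof.
move=> i_gt0.
set A1 := [set S : {set T} | S \subset P & #|S| == i].
set A2 := [set S : {set T} | S \subset ~: P & #|S| == i].
have disjA : A1 :&: A2 = set0.
  apply/setP => S; rewrite !inE; apply/negbTE/negP => /andP[/andP[SP /eqP Si] /andP[SCP _]].
  have : S \subset P :&: ~: P by rewrite subsetI SP SCP.
  by rewrite setICr subset0 => /eqP S0; rewrite S0 cards0 in Si; rewrite -Si in i_gt0.
have splitE : [set S : {set T} | #|S| == i] :\: (A1 :|: A2)
    = [set S : {set T} | ~~ (S \subset P) && ~~ (S \subset ~: P) && (#|S| == i)].
  by apply/setP => S; rewrite !inE; case: (#|S| == i); case: (S \subset P); case: (S \subset ~: P).
have subA : [set S : {set T} | #|S| == i] :&: (A1 :|: A2) = A1 :|: A2.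
  by apply/setIidPr/subsetP => S; rewrite !inE => /orP[] /andP[_ ->].
have := cardsID (A1 :|: A2) [set S : {set T} | #|S| == i].
rewrite subA splitE card_draws cardsU disjA cards0 subn0 /A1 /A2 !cards_draws.
lia.
Qed.

Lemma subset_not_dominating (G : sgraph) (A S : {set vert G}) (w : vert G) :
  w \notin A -> (forall z, z \in A -> ~~ @adj G w z) -> S \subset A -> ~~ dominating S.
Proof.
move=> wA w_isolated SA; apply/forallP => /(_ w); rewrite (contra (subsetP SA w)) //=.
by case/existsP=> u /andP[/(subsetP SA) /w_isolated/negbTE ->].
Qed.

Section TwoCliques.

Variables (G : sgraph) (P : {set vert G}).

Hypothesis same_side_adj :
  forall x y, x != y -> (x \in P) = (y \in P) -> @adj G x y.
Hypothesis isolated_in : exists2 w, w \in P & forall z, z \notin P -> ~~ @adj G w z.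
Hypothesis isolated_out : exists2 w, w \notin P & forall z, z \in P -> ~~ @adj G w z.

Lemma dominating_two_cliques (S : {set vert G}) :
  dominating S = ~~ (S \subset P) && ~~ (S \subset ~: P).
Proof.
apply/idP/andP => [S_dom | [/subsetPn[x xS xP] /subsetPn[y yS]]].
  case: isolated_in isolated_out => [w1 w1P w1_iso] [w2 w2P w2_iso].
  split; apply: contraL S_dom.
    exact: subset_not_dominating w2P w2_iso.
  apply: (@subset_not_dominating _ _ _ w1); first by rewrite inE negbK.
  by move=> z; rewrite inE; apply: w1_iso.
rewrite inE negbK => yP; apply/forallP => w; apply/implyP => wS; apply/existsP.
have w_neq u : u \in S -> w != u by move=> uS; apply: contraNneq wS => ->.
case: (boolP (w \in P)) => wP; [exists y | exists x]; rewrite ?yS ?xS /=.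
  by apply: same_side_adj; rewrite ?w_neq ?wP ?yP.
by apply: same_side_adj; rewrite ?w_neq ?(negbTE wP) ?(negbTE xP).
Qed.

Lemma dom_poly_two_cliques :
  dom_poly G = (((1 + 'X) ^+ #|P| - 1) * ((1 + 'X) ^+ #|~: P| - 1))%R.
Proof.
apply/polyP => i.
have -> : (((1 + 'X) ^+ #|P| - 1) * ((1 + 'X) ^+ #|~: P| - 1)
    = (1 + 'X) ^+ #|vert G| - (1 + 'X) ^+ #|P| - (1 + 'X) ^+ #|~: P| + 1 :> {poly int})%R.
  by rewrite -(cardsC P) exprD; ring.
rewrite coef_dom_poly !(coefD, coefN, coef_1addX_exp) coef1.
case: i => [|i]; first by rewrite !bin0 /=; ring.
rewrite -(card_draws_meeting_both P (ltn0Sn i)) mul1n.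
have -> : dom_count G i.+1 = #|[set S : {set vert G} |
    ~~ (S \subset P) && ~~ (S \subset ~: P) && (#|S| == i.+1)]|.
  by apply: eq_card => S; rewrite !inE dominating_two_cliques.
by rewrite !natrD /=; ring.
Qed.

End TwoCliques.

Lemma card_compl_swapped (T : finType) (f : T -> T) (A : {set T}) :
  involutive f -> (forall x, (f x \in A) = (x \notin A)) -> #|~: A| = #|A|.
Proof.
move=> fK f_swaps; rewrite -(card_preimset A (inv_inj fK)).
by apply: eq_card => x; rewrite !inE f_swaps.
Qed.

Definition is_inl (A B : Type) (x : A + B) : bool := if x is inl _ then true else false.

Definition swap_copies (n : nat) (x : 'I_n + 'I_n) : 'I_n + 'I_n :=
  match x with inl i => inr i | inr i => inl i end.

Definition first_copy (n : nat) : {set 'I_n + 'I_n} := [set x | is_inl x].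

Lemma card_first_copy (n : nat) : #|first_copy n| = n /\ #|~: first_copy n| = n.
Proof.
have eqC : #|~: first_copy n| = #|first_copy n|.
  by apply: (@card_compl_swapped _ (@swap_copies n)) => -[] i; rewrite ?inE.
by have := cardsC (first_copy n); rewrite eqC card_sum card_ord; lia.
Qed.

Lemma dom_poly_KK (n : nat) : 1 < n -> dom_poly (KK n) = (((1 + 'X) ^+ n - 1) ^+ 2)%R.
Proof.
move=> n_gt1; have [card1 card2] := card_first_copy n.
rewrite (@dom_poly_two_cliques (KK n) (first_copy n)) ?card1 ?card2 ?expr2 //.
- by move=> [i|i] [j|j]; rewrite !inE.
- by exists (inl (Ordinal n_gt1)) => [|[] i]; rewrite !inE.
- by exists (inr (Ordinal n_gt1)) => [|[] i]; rewrite !inE.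
Qed.

Lemma dom_poly_Bar (n : nat) : 1 < n -> dom_poly (Bar n) = (((1 + 'X) ^+ n - 1) ^+ 2)%R.
Proof.
move=> n_gt1; have [card1 card2] := card_first_copy n.
rewrite (@dom_poly_two_cliques (Bar n) (first_copy n)) ?card1 ?card2 ?expr2 //.
- by move=> [i|i] [j|j]; rewrite !inE.
- by exists (inl (Ordinal n_gt1)) => [|[] i]; rewrite !inE.
- by exists (inr (Ordinal n_gt1)) => [|[] i]; rewrite !inE.
Qed.

Definition book_side (m : nat) (x : bool + ('I_m * bool)) : bool :=
  match x with inl p => ~~ p | inr (_, b) => b end.

Definition book_flip (m : nat) (x : bool + ('I_m * bool)) : bool + ('I_m * bool) :=
  match x with inl p => inl (~~ p) | inr (i, b) => inr (i, ~~ b) end.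

(* The vertices u, b_1, ..., b_m: pairwise non-adjacent in B_m, hence a clique of the complement. *)
Definition book_half (m : nat) : {set bool + ('I_m * bool)} := [set x | book_side x].

Lemma card_book_half (m : nat) :
  #|book_half m| = m.+1 /\ #|~: book_half m| = m.+1.
Proof.
have eqC : #|~: book_half m| = #|book_half m|.
  apply: (@card_compl_swapped _ (@book_flip m)) => -[p|[i b]];
    by rewrite ?inE /= ?negbK.
by have := cardsC (book_half m); rewrite eqC card_sum card_prod card_bool card_ord; lia.
Qed.

Lemma dom_poly_compl_Book (m : nat) :
  dom_poly (compl (Book m)) = (((1 + 'X) ^+ m.+1 - 1) ^+ 2)%R.
Proof.
have [card1 card2] := card_book_half m.
rewrite (@dom_poly_two_cliques (compl (Book m)) (book_half m)) ?card1 ?card2 ?expr2 //.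
- move=> x y x_neq_y; rewrite /= /compl_adj x_neq_y /=; move: x_neq_y.
  by case: x => [[]|[i []]]; case: y => [[]|[j []]]; rewrite !inE //= andbF.
- by exists (inl false) => [|[[]|[i []]]]; rewrite inE //= /compl_adj /= ?andbF.
- by exists (inl true) => [|[[]|[i []]]]; rewrite inE //= /compl_adj /= ?andbF.
Qed.

Definition cluster_graph (G : sgraph) : Prop :=
  forall x y z, @adj G x y -> @adj G y z -> x != z -> @adj G x z.

Lemma isomorphic_cluster_graph (G H : sgraph) :
  isomorphic G H -> cluster_graph G -> cluster_graph H.
Proof.
case=> f [[g fK gK] f_adj] G_cluster x y z.
rewrite -[x]gK -[y]gK -[z]gK !f_adj => xy yz xz.
by apply: G_cluster yz _; last by apply: contraNneq xz => ->.
Qed.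

Lemma cluster_graph_KK (n : nat) : cluster_graph (KK n).
Proof. by move=> [i|i] [j|j] [k|k]. Qed.

Lemma Bar_not_cluster_graph (n : nat) : 1 < n -> ~ cluster_graph (Bar n).
Proof.
move=> n_gt1; have n_gt0 := ltnW n_gt1.
by move/(_ (inl (Ordinal n_gt1)) (inl (Ordinal n_gt0)) (inr (Ordinal n_gt0)))/(_ isT isT isT).
Qed.

Theorem mainTheorem4 (n : nat) (hn : 2 <= n) :
  let target : {poly int} := (((1 + 'X) ^+ n - 1) ^+ 2)%R in
  [/\ [/\ dom_poly (Bar n) = target,
          dom_poly (compl (Book n.-1)) = target
        & dom_poly (KK n) = target],
      (D_equiv (Bar n) (Bar n) /\ D_equiv (compl (Book n.-1)) (Bar n)
        /\ D_equiv (KK n) (Bar n)),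
      (forall H : sgraph, D_equiv H (Bar n) <-> D_equiv H (compl (Book n.-1)))
    & ~ D_unique (Bar n)].
Proof.
move=> target.
have dom_Bar : dom_poly (Bar n) = target by exact: dom_poly_Bar.
have dom_KK : dom_poly (KK n) = target by exact: dom_poly_KK.
have dom_Book : dom_poly (compl (Book n.-1)) = target.
  by rewrite dom_poly_compl_Book prednK // ltnW.
split => //.
- by rewrite /D_equiv dom_Bar dom_Book dom_KK.
- by move=> H; rewrite /D_equiv dom_Bar dom_Book.
- move=> Bar_unique; apply: (Bar_not_cluster_graph hn).
  have KK_iso_Bar : isomorphic (KK n) (Bar n).
    by apply: Bar_unique; rewrite /D_equiv dom_KK dom_Bar.
  exact: isomorphic_cluster_graph KK_iso_Bar (@cluster_graph_KK n).
Qed.
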